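(* Let $(w_s,\eta_s)$ be the soliton-like traveling wave (homoclinic solution) with parameters satisfying $\frac{\beta(\nu+1)}{2(\nu+2)\eta_\infty^{\nu+3}}<s^2<\frac{\beta}{\eta_\infty^{\nu+3}}$. Then the generalized eigenvalue problem $\kappa M''=\big[\gamma-\mu+\frac{s^2}{\mu-(\nu+2)\eta_s(z)^{-(\nu+3)}}\big]M$ on $\mathbb{R}$ has at most one eigenvalue $\mu<0$ with a nonzero eigenfunction $M\in L^2(\mathbb{R})$ (decaying with its derivative at $\pm\infty$). If such $\mu$ exists, it is an eigenvalue of $\mathcal{L}^s$ with eigenfunction $\big(M,\ sM\,(\mu-(\nu+2)\eta_s^{-(\nu+3)})^{-1}\big)^{tr}$.
   Context: Fix $\beta>0$, $\nu>-1$, $\kappa>0$, $\gamma=\beta/(\nu+2)$, $\eta_\infty>0$. The soliton-like traveling wave is a non-constant smooth pair $(w_s(z),\eta_s(z))$ with $\eta_s>0$, satisfying $s w_s+\eta_\infty^{-(\nu+2)}-\eta_s^{-(\nu+2)}=0$, $(\gamma-\kappa\partial_z^2)w_s+s(\eta_s-\eta_\infty)=0$, $w_s\to0$, $\eta_s\to\eta_\infty$ as $|z|\to\infty$. $\mathcal{L}^s=\begin{pmatrix}\gamma-\kappa\partial_z^2 & s\\ s & (\nu+2)\eta_s(z)^{-(\nu+3)}\end{pmatrix}$ on $L^2(\mathbb{R})^2$. *)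

From Stdlib Require Import Reals Lra.
Open Scope R_scope.

Definition smooth (f : R -> R) (d : nat -> R -> R) : Prop :=
  (forall x, d O x = f x) /\ (forall n x, derivable_pt_lim (d n) x (d (S n) x)).

Definition tends_pinf (f : R -> R) (l : R) : Prop :=
  forall eps, 0 < eps -> exists A, forall z, A <= z -> Rabs (f z - l) < eps.
Definition tends_minf (f : R -> R) (l : R) : Prop :=
  forall eps, 0 < eps -> exists A, forall z, z <= A -> Rabs (f z - l) < eps.

(* f in L^2(R) (improper Riemann sense; f^2 locally Riemann integrable with
   uniformly bounded integrals over compact intervals). *)
Definition sq_integrable (f : R -> R) : Prop :=
  (forall a b, inhabited (Riemann_integrable (fun x => (f x) ^ 2) a b)) /\
  exists C, forall a b (pr : Riemann_integrable (fun x => (f x) ^ 2) a b),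
    a <= b -> RiemannInt pr <= C.

Definition gam (beta nu : R) : R := beta / (nu + 2).

Definition soliton (beta nu kappa eta_inf s : R) (w eta : R -> R) : Prop :=
  exists dw deta : nat -> R -> R,
    smooth w dw /\ smooth eta deta /\
    (forall z, 0 < eta z) /\
    (exists z1 z2, w z1 <> w z2 \/ eta z1 <> eta z2) /\
    (forall z, s * w z + Rpower eta_inf (-(nu + 2)) - Rpower (eta z) (-(nu + 2)) = 0) /\
    (forall z, gam beta nu * w z - kappa * dw 2%nat z + s * (eta z - eta_inf) = 0) /\
    tends_pinf w 0 /\ tends_minf w 0 /\
    tends_pinf eta eta_inf /\ tends_minf eta eta_inf.

Definition pot (nu : R) (eta : R -> R) (z : R) : R :=
  (nu + 2) * Rpower (eta z) (-(nu + 3)).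

Definition gen_eigen (beta nu kappa s : R) (eta : R -> R) (mu : R) (M : R -> R) : Prop :=
  exists M1 M2 : R -> R,
    (forall z, derivable_pt_lim M z (M1 z)) /\
    (forall z, derivable_pt_lim M1 z (M2 z)) /\
    sq_integrable M /\ (exists z, M z <> 0) /\
    tends_pinf M 0 /\ tends_minf M 0 /\ tends_pinf M1 0 /\ tends_minf M1 0 /\
    (forall z, kappa * M2 z =
       (gam beta nu - mu + s ^ 2 / (mu - pot nu eta z)) * M z).

(* mu is an eigenvalue of L^s = [[gamma - kappa d^2, s], [s, pot]] on L^2(R)^2
   with eigenfunction (u, v) in its domain H^2 x L^2. *)
Definition Ls_eigen (beta nu kappa s : R) (eta : R -> R) (mu : R) (u v : R -> R) : Prop :=
  exists u1 u2 : R -> R,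
    (forall z, derivable_pt_lim u z (u1 z)) /\
    (forall z, derivable_pt_lim u1 z (u2 z)) /\
    sq_integrable u /\ sq_integrable u1 /\ sq_integrable u2 /\ sq_integrable v /\
    (exists z, u z <> 0 \/ v z <> 0) /\
    (forall z, gam beta nu * u z - kappa * u2 z + s * v z = mu * u z) /\
    (forall z, s * u z + pot nu eta z * v z = mu * v z).

(* Written as [M'' = q_mu M] with [q_mu = (gamma - mu + s^2 / (mu - V)) / kappa] and
   [V = (nu + 2) eta_s^-(nu+3) > 0], the eigenvalue problem has a potential that decreases
   strictly in [mu <= 0].  By translation invariance [w_s'] solves it for [mu = 0].  The
   conserved energy [kappa / 2 w_s'^2 = G(w_s)] and the convexity of [G'] (for [s > 0];
   [w -> -w] flips the sign of [s]) show that [w_s'] vanishes at most once, so by Sturm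
   comparison an eigenfunction for [mu < 0] has no zero.  Two nonvanishing eigenfunctions
   for distinct [mu] would have a strictly monotone Wronskian vanishing at both ends.
   Finally [M' in L^2] by integration by parts, and [(M, s M / (mu - V))] solves
   [L^s U = mu U] by algebra. *)

From Stdlib Require Import Reals Lra Psatz Classical.
Open Scope R_scope.

(** * Calculus on the real line *)

Lemma derivable_pt_lim_eq f x l l' :
  derivable_pt_lim f x l -> l = l' -> derivable_pt_lim f x l'.
Proof. now intros D <-. Qed.

Lemma derivable_pt_lim_continuity_pt f x l :
  derivable_pt_lim f x l -> continuity_pt f x.
Proof. intros D; apply derivable_continuous_pt; now exists l. Qed.

Lemma derivable_pt_lim_Rpower_comp f x l e : 0 < f x -> derivable_pt_lim f x l ->
  derivable_pt_lim (fun y => Rpower (f y) e) x (e * Rpower (f x) (e - 1) * l).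
Proof.
  intros Hpos D. apply (derivable_pt_lim_comp f (fun u => Rpower u e)); auto.
  now apply derivable_pt_lim_power.
Qed.

Lemma derivable_pt_lim_reflect f x l :
  derivable_pt_lim f (- x) l -> derivable_pt_lim (fun y => f (- y)) x (- l).
Proof.
  intros D; apply derivable_pt_lim_mirr_fwd. now rewrite Ropp_involutive.
Qed.

Lemma derivable_pt_lim_locally_const f x l a b c : a < x < b ->
  (forall y, a < y < b -> f y = c) -> derivable_pt_lim f x l -> l = 0.
Proof.
  intros Hx Hc D. apply (uniqueness_limite (fun _ => c) x); [|apply derivable_pt_lim_const].
  apply (derivable_pt_lim_locally_ext f _ x a b); auto.
Qed.

Lemma derivable_pt_lim_interior_max f x l a b : a < x < b ->
  (forall y, a < y < b -> f y <= f x) -> derivable_pt_lim f x l -> l = 0.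
Proof.
  intros Hx Hmax D. assert (pr : derivable_pt f x) by now exists l.
  rewrite <- (derive_pt_eq_0 f x l pr D).
  apply (deriv_maximum f a b x pr); try lra. intros; apply Hmax; lra.
Qed.

Lemma derivable_pt_lim_nonneg_at_zero f x l b : x < b -> f x = 0 ->
  (forall y, x < y < b -> 0 < f y) -> derivable_pt_lim f x l -> 0 <= l.
Proof.
  intros Hb Hx Hpos D. apply Rnot_lt_le; intros Hl.
  destruct (D (- l)) as [d Hd]; [lra|].
  set (h := Rmin (d / 2) ((b - x) / 2)).
  assert (Hh : 0 < h <= d / 2)
    by (split; [apply Rmin_pos|apply Rmin_l]; pose proof (cond_pos d); lra).
  assert (Hhb : h <= (b - x) / 2) by apply Rmin_r.
  assert (Hq := Hd h ltac:(lra) ltac:(rewrite Rabs_right; lra)).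
  rewrite Hx, Rminus_0_r in Hq. apply Rabs_def2 in Hq as [Hq _].
  assert (Hf := Hpos (x + h) ltac:(lra)).
  assert (0 < f (x + h) / h) by (apply Rdiv_lt_0_compat; lra). lra.
Qed.

Lemma derivable_pt_lim_nonpos_at_zero f x l a : a < x -> f x = 0 ->
  (forall y, a < y < x -> 0 < f y) -> derivable_pt_lim f x l -> l <= 0.
Proof.
  intros Ha Hx Hpos D.
  enough (0 <= - l) by lra.
  apply (derivable_pt_lim_nonneg_at_zero (fun y => f (- y)) (- x) (- l) (- a)); try lra.
  - now rewrite Ropp_involutive.
  - intros y Hy; apply Hpos; lra.
  - apply derivable_pt_lim_reflect. now rewrite Ropp_involutive.
Qed.

Lemma continuity_pt_pos_nbhd f x : continuity_pt f x -> 0 < f x ->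
  exists d, 0 < d /\ forall y, Rabs (y - x) < d -> 0 < f y.
Proof.
  intros C P. destruct (C (f x / 2)) as [d [Hd Hy]]; [lra|].
  exists d; split; auto. intros y Hyx. destruct (Req_dec y x) as [->|Hne]; auto.
  assert (Hyx' : Rabs (f y - f x) < f x / 2) by (apply (Hy y); repeat split; auto).
  apply Rabs_def2 in Hyx'. lra.
Qed.

Lemma continuity_pt_neg_nbhd f x : continuity_pt f x -> f x < 0 ->
  exists d, 0 < d /\ forall y, Rabs (y - x) < d -> f y < 0.
Proof.
  intros C N. destruct (continuity_pt_pos_nbhd (fun y => - f y) x) as [d [Hd H]].
  - now apply continuity_pt_opp.
  - lra.
  - exists d; split; auto. intros y Hy; specialize (H y Hy); simpl in H; lra.
Qed.

Lemma continuity_pt_nonneg_right f x : continuity_pt f x ->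
  (forall y, x < y -> 0 < f y) -> 0 <= f x.
Proof.
  intros C P. apply Rnot_lt_le; intros Hn.
  destruct (continuity_pt_neg_nbhd f x C Hn) as [d [Hd Hy]].
  assert (f (x + d / 2) < 0) by (apply Hy; rewrite Rabs_right; lra).
  specialize (P (x + d / 2)). lra.
Qed.

Lemma deriv_nonneg_le f f' a b : a <= b ->
  (forall c, a <= c <= b -> derivable_pt_lim f c (f' c)) ->
  (forall c, a < c < b -> 0 <= f' c) -> f a <= f b.
Proof.
  intros Hab D P. destruct (Req_dec a b) as [->|Hne]; [lra|].
  destruct (MVT_cor2 f f' a b) as [c [E Hc]]; auto; try lra.
  specialize (P c Hc). nra.
Qed.

Lemma deriv_pos_lt f f' a b : a < b ->
  (forall c, a <= c <= b -> derivable_pt_lim f c (f' c)) ->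
  (forall c, a < c < b -> 0 < f' c) -> f a < f b.
Proof.
  intros Hab D P. destruct (MVT_cor2 f f' a b) as [c [E Hc]]; auto.
  specialize (P c Hc). nra.
Qed.

Lemma deriv_zero_const f f' : (forall c, derivable_pt_lim f c (f' c)) ->
  (forall c, f' c = 0) -> forall x y, f x = f y.
Proof.
  intros D Z.
  assert (K : forall x y, x <= y -> f x = f y).
  { intros x y Hxy. apply Rle_antisym.
    - apply (deriv_nonneg_le f f'); auto. intros c _; rewrite Z; lra.
    - enough (- f x <= - f y) by lra.
      apply (deriv_nonneg_le (fun t => - f t) (fun t => - f' t)); auto.
      + intros; now apply derivable_pt_lim_opp.
      + intros c _; rewrite Z; lra. }
  intros x y. destruct (Rle_dec x y); [now apply K|symmetry; apply K; lra].
Qed.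

Lemma continuous_nonzero_sign f (P : R -> Prop) x0 : continuity f -> P x0 ->
  (forall x y z, P x -> P y -> x <= z <= y -> P z) -> (forall z, P z -> f z <> 0) ->
  (forall z, P z -> 0 < f z) \/ (forall z, P z -> f z < 0).
Proof.
  intros C Px0 Hconv N.
  assert (Same : forall x y, P x -> P y -> x <= y -> 0 < f x * f y).
  { intros x y Px Py Hxy. apply Rnot_le_lt; intros Hle.
    destruct (IVT_cor f x y C Hxy Hle) as [z [Hz Fz]].
    exact (N z (Hconv x y z Px Py Hz) Fz). }
  assert (Same' : forall z, P z -> 0 < f z * f x0).
  { intros z Pz. destruct (Rle_dec z x0).
    - now apply Same.
    - rewrite Rmult_comm. apply Same; auto; lra. }
  destruct (Rlt_dec 0 (f x0)) as [Hp|Hn].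
  - left; intros z Pz; specialize (Same' z Pz); nra.
  - assert (f x0 <> 0) by auto. right; intros z Pz; specialize (Same' z Pz); nra.
Qed.

Lemma continuity_attains W y1 y2 u : continuity W -> W y1 <= u <= W y2 -> exists y, W y = u.
Proof.
  intros C Hu.
  assert (Cu : continuity (fun y => W y - u)) by (intros x; apply continuity_pt_minus;
    [apply C|apply continuity_pt_const; now intros ? ?]).
  destruct (Rle_dec y1 y2).
  - destruct (IVT_cor _ y1 y2 Cu r) as [y [_ Hy]]; [nra|]. exists y; lra.
  - destruct (IVT_cor _ y2 y1 Cu) as [y [_ Hy]]; [lra|nra|]. exists y; lra.
Qed.

Lemma first_zero f a b : (forall x, a <= x <= b -> continuity_pt f x) -> a < b ->
  0 < f a -> f b <= 0 -> exists T, a < T <= b /\ f T = 0 /\ forall y, a <= y < T -> 0 < f y.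
Proof.
  intros C Hab Ha Hb.
  set (E := fun x => a <= x <= b /\ forall y, a <= y <= x -> 0 < f y).
  assert (Ea : E a) by (split; [lra|intros y Hy; now replace y with a by lra]).
  destruct (completeness E) as [T [HT1 HT2]].
  { exists b; intros x [Hx _]; lra. }
  { now exists a. }
  assert (HaT : a <= T) by now apply HT1.
  assert (HTb : T <= b) by (apply HT2; intros x [Hx _]; lra).
  assert (below : forall y, a <= y < T -> 0 < f y).
  { intros y Hy. destruct (classic (exists x, E x /\ y < x)) as [[x [[_ Hx] Hyx]]|N].
    - apply Hx; lra.
    - exfalso. enough (T <= y) by lra. apply HT2. intros x Ex.
      apply Rnot_lt_le; intros Hyx; apply N; now exists x. }
  exists T. split; [|split; auto].
  { split; auto. destruct (Req_dec T a) as [->|]; [|lra].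
    destruct (continuity_pt_pos_nbhd f a (C a ltac:(lra)) Ha) as [d [Hd Hy]].
    enough (E (Rmin b (a + d / 2))) as Hm.
    { specialize (HT1 _ Hm).
      assert (a < Rmin b (a + d / 2)) by (apply Rmin_glb_lt; lra). lra. }
    split; [split; [apply Rmin_glb; lra|apply Rmin_l]|].
    intros y Hy'. apply Hy. assert (y <= a + d / 2) by (eapply Rle_trans; [apply Hy'|apply Rmin_r]).
    apply Rabs_def1; lra. }
  destruct (Rtotal_order (f T) 0) as [Hn|[Hz|Hp]]; auto; exfalso.
  - destruct (continuity_pt_neg_nbhd f T (C T (conj HaT HTb)) Hn) as [d [Hd Hy]].
    destruct (Req_dec T a) as [->|HTa]; [lra|].
    set (y := Rmax a (T - d / 2)).
    assert (Hy' : a <= y < T) by (split; [apply Rmax_l|apply Rmax_lub_lt; lra]).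
    assert (f y < 0); [|specialize (below y Hy'); lra].
    apply Hy. assert (T - d / 2 <= y) by apply Rmax_r. apply Rabs_def1; lra.
  - destruct (Req_dec T b) as [->|HTb']; [lra|].
    destruct (continuity_pt_pos_nbhd f T (C T (conj HaT HTb)) Hp) as [d [Hd Hy]].
    set (y := Rmin b (T + d / 2)).
    assert (Hyb : T < y) by (apply Rmin_glb_lt; lra).
    enough (Ey : E y) by (specialize (HT1 y Ey); lra).
    split; [split; [lra|apply Rmin_l]|].
    intros z Hz. destruct (Rlt_dec z T); [apply below; lra|]. apply Hy.
    assert (z <= T + d / 2) by (eapply Rle_trans; [apply Hz|apply Rmin_r]).
    apply Rabs_def1; lra.
Qed.

Lemma last_zero f a b : (forall x, a <= x <= b -> continuity_pt f x) -> a < b ->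
  f a <= 0 -> 0 < f b -> exists T, a <= T < b /\ f T = 0 /\ forall y, T < y <= b -> 0 < f y.
Proof.
  intros C Hab Ha Hb.
  destruct (first_zero (fun y => f (- y)) (- b) (- a)) as [T [H1 [H2 H3]]];
    rewrite ?Ropp_involutive; auto; try lra.
  - intros x Hx. apply (continuity_pt_comp (fun y => - y) f x).
    + apply (derivable_pt_lim_continuity_pt _ _ (-1)), derivable_pt_lim_opp, derivable_pt_lim_id.
    + apply C; lra.
  - exists (- T). split; [lra|split; auto]. intros y Hy.
    rewrite <- (Ropp_involutive y). apply H3; lra.
Qed.

Lemma continuity_bounded_on f a b : a <= b -> (forall x, continuity_pt f x) ->
  exists B, forall x, a <= x <= b -> Rabs (f x) <= B.
Proof.
  intros Hab C.
  destruct (continuity_ab_maj (fun x => Rabs (f x)) a b Hab) as [m [Hm _]].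
  - intros c _. apply (continuity_pt_comp f Rabs c (C c)), Rcontinuity_abs.
  - now exists (Rabs (f m)).
Qed.

(** * Uniqueness for linear second-order equations *)

Lemma gronwall_forward E E' K a b : a <= b ->
  (forall t, a <= t <= b -> derivable_pt_lim E t (E' t)) ->
  (forall t, a <= t <= b -> E' t <= K * E t) -> E a = 0 -> E b <= 0.
Proof.
  intros Hab D Hle Ea.
  assert (Hh : E b * exp (- K * b) <= E a * exp (- K * a)).
  { enough (- (E a * exp (- K * a)) <= - (E b * exp (- K * b))) by lra.
    apply (deriv_nonneg_le (fun t => - (E t * exp (- K * t)))
             (fun t => - ((E' t - K * E t) * exp (- K * t)))); auto.
    - intros c Hc. apply derivable_pt_lim_opp.
      eapply derivable_pt_lim_eq.
      + apply derivable_pt_lim_mult; [now apply D|].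
        apply (derivable_pt_lim_comp (fun t => - K * t) exp).
        * apply derivable_pt_lim_scal, derivable_pt_lim_id.
        * apply derivable_pt_lim_exp.
      + cbv beta; ring.
    - intros c Hc. specialize (Hle c ltac:(lra)). pose proof (exp_pos (- K * c)). nra. }
  rewrite Ea, Rmult_0_l in Hh. pose proof (exp_pos (- K * b)). nra.
Qed.

Lemma gronwall_backward E E' K a b : a <= b ->
  (forall t, a <= t <= b -> derivable_pt_lim E t (E' t)) ->
  (forall t, a <= t <= b -> - E' t <= K * E t) -> E b = 0 -> E a <= 0.
Proof.
  intros Hab D Hle Eb. rewrite <- (Ropp_involutive a).
  apply (gronwall_forward (fun t => E (- t)) (fun t => - E' (- t)) K (- b) (- a)); try lra.
  - intros t Ht. apply derivable_pt_lim_reflect, D; lra.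
  - intros t Ht. apply Hle; lra.
  - now rewrite Ropp_involutive.
Qed.

Lemma ode_unique M M1 M2 q z0 :
  (forall z, derivable_pt_lim M z (M1 z)) -> (forall z, derivable_pt_lim M1 z (M2 z)) ->
  (forall z, M2 z = q z * M z) -> (forall z, continuity_pt q z) ->
  M z0 = 0 -> M1 z0 = 0 -> forall z, M z = 0.
Proof.
  intros D1 D2 Heq Cq H0 H1 z.
  set (a := Rmin z z0); set (b := Rmax z z0).
  assert (Hab : a <= b) by (eapply Rle_trans; [apply Rmin_l|apply Rmax_l]).
  destruct (continuity_bounded_on q a b Hab Cq) as [C HC].
  set (E := fun t => M t ^ 2 + M1 t ^ 2).
  set (E' := fun t => 2 * M t * M1 t * (1 + q t)).
  assert (DE : forall t, derivable_pt_lim E t (E' t)).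
  { intros t. unfold E, E'. eapply derivable_pt_lim_eq.
    - apply derivable_pt_lim_plus; apply (derivable_pt_lim_comp _ (fun x => x ^ 2));
        [apply D1|apply derivable_pt_lim_pow|apply D2|apply derivable_pt_lim_pow].
    - rewrite Heq. simpl; ring. }
  assert (Bound : forall t, a <= t <= b -> Rabs (E' t) <= (1 + C) * E t).
  { intros t Ht. specialize (HC t Ht). unfold E, E'.
    assert (-C <= q t <= C) by (split; [pose proof (Rle_abs (- q t)); rewrite Rabs_Ropp in *|
      pose proof (Rle_abs (q t))]; lra).
    pose proof (pow2_ge_0 (M t - M1 t)); pose proof (pow2_ge_0 (M t + M1 t)).
    apply Rabs_le; split; nra. }
  assert (Ez : E z <= 0).
  { destruct (Rle_dec z0 z).
    - replace z with b by (unfold b; rewrite Rmax_left; lra).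
      apply (gronwall_forward E E' (1 + C) a b); auto.
      + intros t Ht; pose proof (Rle_abs (E' t)); pose proof (Bound t Ht); lra.
      + unfold a; rewrite Rmin_right by lra. unfold E; rewrite H0, H1; ring.
    - replace z with a by (unfold a; rewrite Rmin_left; lra).
      apply (gronwall_backward E E' (1 + C) a b); auto.
      + intros t Ht; pose proof (Rle_abs (- E' t)); rewrite Rabs_Ropp in *;
          pose proof (Bound t Ht); lra.
      + unfold b; rewrite Rmax_right by lra. unfold E; rewrite H0, H1; ring. }
  unfold E in Ez. pose proof (pow2_ge_0 (M z)); pose proof (pow2_ge_0 (M1 z)). nra.
Qed.

(** * Limits at infinity *)

Definition decays (f : R -> R) : Prop := tends_pinf f 0 /\ tends_minf f 0.

Lemma tends_minf_reflect f l : tends_minf f l <-> tends_pinf (fun z => f (- z)) l.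
Proof.
  split; intros T eps He; destruct (T eps He) as [A HA]; exists (- A); intros z Hz.
  - apply HA; lra.
  - rewrite <- (Ropp_involutive z). apply HA; lra.
Qed.

Lemma tends_pinf_plus0 f g : tends_pinf f 0 -> tends_pinf g 0 ->
  tends_pinf (fun z => f z + g z) 0.
Proof.
  intros F G eps He. destruct (F (eps / 2)) as [A1 H1]; [lra|].
  destruct (G (eps / 2)) as [A2 H2]; [lra|].
  exists (Rmax A1 A2). intros z Hz.
  specialize (H1 z (Rle_trans _ _ _ (Rmax_l _ _) Hz)).
  specialize (H2 z (Rle_trans _ _ _ (Rmax_r _ _) Hz)).
  rewrite Rminus_0_r in *. apply Rabs_def2 in H1; apply Rabs_def2 in H2. apply Rabs_def1; lra.
Qed.

Lemma tends_pinf_scal0 c f : tends_pinf f 0 -> tends_pinf (fun z => c * f z) 0.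
Proof.
  intros F eps He. destruct (F (eps / (Rabs c + 1))) as [A HA].
  { apply Rdiv_lt_0_compat; auto. pose proof (Rabs_pos c); lra. }
  exists A. intros z Hz. specialize (HA z Hz). rewrite Rminus_0_r in *. rewrite Rabs_mult.
  pose proof (Rabs_pos c). pose proof (Rabs_pos (f z)).
  apply Rmult_lt_compat_l with (r := Rabs c + 1) in HA; [|lra].
  replace ((Rabs c + 1) * (eps / (Rabs c + 1))) with eps in HA by (field; lra). nra.
Qed.

Lemma tends_pinf_opp0 f : tends_pinf f 0 -> tends_pinf (fun z => - f z) 0.
Proof.
  intros F eps He. destruct (F eps He) as [A HA]. exists A. intros z Hz.
  specialize (HA z Hz). rewrite Rminus_0_r in *. now rewrite Rabs_Ropp.
Qed.

Lemma tends_pinf_mult0 f g : tends_pinf f 0 -> tends_pinf g 0 ->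
  tends_pinf (fun z => f z * g z) 0.
Proof.
  intros F G eps He. destruct (F 1 Rlt_0_1) as [A1 H1]. destruct (G eps He) as [A2 H2].
  exists (Rmax A1 A2). intros z Hz.
  specialize (H1 z (Rle_trans _ _ _ (Rmax_l _ _) Hz)).
  specialize (H2 z (Rle_trans _ _ _ (Rmax_r _ _) Hz)).
  rewrite Rminus_0_r in *. rewrite Rabs_mult.
  pose proof (Rabs_pos (f z)). pose proof (Rabs_pos (g z)). nra.
Qed.

Lemma tends_pinf_comp_continuous G f : continuity_pt G 0 -> tends_pinf f 0 ->
  tends_pinf (fun z => G (f z)) (G 0).
Proof.
  intros C F eps He. destruct (C eps He) as [d [Hd Hy]].
  destruct (F d Hd) as [A HA]. exists A. intros z Hz. specialize (HA z Hz).
  rewrite Rminus_0_r in HA. destruct (Req_dec (f z) 0) as [->|Hne].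
  - rewrite Rminus_diag, Rabs_R0; auto.
  - apply (Hy (f z)). repeat split; auto. simpl; unfold Rdist. now rewrite Rminus_0_r.
Qed.

Lemma tends_pinf_const_zero f c : (forall z, f z = c) -> tends_pinf f 0 -> c = 0.
Proof.
  intros E F. destruct (Req_dec c 0) as [|Hne]; auto. exfalso.
  destruct (F (Rabs c)) as [A HA]; [now apply Rabs_pos_lt|].
  specialize (HA A (Rle_refl _)). rewrite E, Rminus_0_r in HA. lra.
Qed.

(* A crude Landau inequality, by two mean-value steps on [[z, z + 1]]. *)
Lemma tends_pinf_deriv0 f f1 f2 : (forall z, derivable_pt_lim f z (f1 z)) ->
  (forall z, derivable_pt_lim f1 z (f2 z)) ->
  tends_pinf f 0 -> tends_pinf f2 0 -> tends_pinf f1 0.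
Proof.
  intros D1 D2 T T2 eps He.
  destruct (T (eps / 4)) as [A1 H1]; [lra|]. destruct (T2 (eps / 2)) as [A2 H2]; [lra|].
  exists (Rmax A1 A2). intros z Hz.
  assert (A1 <= z) by (eapply Rle_trans; [apply Rmax_l|apply Hz]).
  assert (A2 <= z) by (eapply Rle_trans; [apply Rmax_r|apply Hz]).
  destruct (MVT_cor2 f f1 z (z + 1)) as [xi [E1 Hxi]]; [lra|intros; auto|].
  destruct (MVT_cor2 f1 f2 z xi) as [ze [E2 Hze]]; [lra|intros; auto|].
  pose proof (H1 z ltac:(lra)) as B1. pose proof (H1 (z + 1) ltac:(lra)) as B2.
  pose proof (H2 ze ltac:(lra)) as B3. rewrite Rminus_0_r in *.
  apply Rabs_def2 in B1; apply Rabs_def2 in B2; apply Rabs_def2 in B3.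
  apply Rabs_def1; nra.
Qed.

Lemma decays_plus f g : decays f -> decays g -> decays (fun z => f z + g z).
Proof.
  intros [F1 F2] [G1 G2]. split; [now apply tends_pinf_plus0|].
  apply tends_minf_reflect, (tends_pinf_plus0 (fun z => f (- z)) (fun z => g (- z)));
    now apply tends_minf_reflect.
Qed.

Lemma decays_scal c f : decays f -> decays (fun z => c * f z).
Proof.
  intros [F1 F2]. split; [now apply tends_pinf_scal0|].
  apply tends_minf_reflect, (tends_pinf_scal0 c (fun z => f (- z))).
  now apply tends_minf_reflect.
Qed.

Lemma decays_opp f : decays f -> decays (fun z => - f z).
Proof.
  intros [F1 F2]. split; [now apply tends_pinf_opp0|].
  apply tends_minf_reflect, (tends_pinf_opp0 (fun z => f (- z))).
  now apply tends_minf_reflect.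
Qed.

Lemma decays_mult f g : decays f -> decays g -> decays (fun z => f z * g z).
Proof.
  intros [F1 F2] [G1 G2]. split; [now apply tends_pinf_mult0|].
  apply tends_minf_reflect, (tends_pinf_mult0 (fun z => f (- z)) (fun z => g (- z)));
    now apply tends_minf_reflect.
Qed.

Lemma decays_minus f g : decays f -> decays g -> decays (fun z => f z - g z).
Proof. intros F G. apply (decays_plus f (fun z => - g z)); auto. now apply decays_opp. Qed.

Lemma decays_reflect f : decays f -> decays (fun z => f (- z)).
Proof.
  intros [F1 F2]. split; [now apply tends_minf_reflect|].
  apply tends_minf_reflect. intros eps He. destruct (F1 eps He) as [A HA].
  exists A. intros z Hz. rewrite Ropp_involutive. auto.
Qed.

Lemma decays_ext f g : (forall z, f z = g z) -> decays f -> decays g.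
Proof.
  intros E [F1 F2].
  split; intros eps He; [destruct (F1 eps He) as [A HA]|destruct (F2 eps He) as [A HA]];
    exists A; intros z Hz; rewrite <- E; auto.
Qed.

Lemma decays_sub_limit f l : tends_pinf f l -> tends_minf f l -> decays (fun z => f z - l).
Proof.
  intros F1 F2.
  split; intros eps He; [destruct (F1 eps He) as [A HA]|destruct (F2 eps He) as [A HA]];
    exists A; intros z Hz; rewrite Rminus_0_r; auto.
Qed.

Lemma continuity_bounded f : continuity f -> decays f -> exists B, forall x, Rabs (f x) <= B.
Proof.
  intros C [Tp Tm]. destruct (Tp 1 Rlt_0_1) as [A1 H1]. destruct (Tm 1 Rlt_0_1) as [A2 H2].
  destruct (continuity_bounded_on f (Rmin A1 A2) (Rmax A1 A2)) as [B HB]; auto.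
  { eapply Rle_trans; [apply Rmin_l|apply Rmax_l]. }
  exists (Rmax 1 B). intros x.
  destruct (Rle_dec A1 x) as [h|h]; [|destruct (Rle_dec x A2) as [h'|h']].
  - specialize (H1 x h). rewrite Rminus_0_r in H1. eapply Rle_trans; [|apply Rmax_l]; lra.
  - specialize (H2 x h'). rewrite Rminus_0_r in H2. eapply Rle_trans; [|apply Rmax_l]; lra.
  - eapply Rle_trans; [|apply Rmax_r]. apply HB. split.
    + eapply Rle_trans; [apply Rmin_r|lra].
    + eapply Rle_trans; [|apply Rmax_l]; lra.
Qed.

Lemma incr_tends_pinf0_neg f f' a : (forall x, a <= x -> derivable_pt_lim f x (f' x)) ->
  (forall x, a < x -> 0 < f' x) -> tends_pinf f 0 -> f a < 0.
Proof.
  intros D P T. apply Rnot_le_lt; intros Ha.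
  assert (H1 : f a < f (a + 1))
    by (apply (deriv_pos_lt f f'); try lra; intros; [apply D|apply P]; lra).
  destruct (T (f (a + 1))) as [A HA]; [lra|].
  set (z := Rmax A (a + 1)).
  assert (f (a + 1) <= f z).
  { apply (deriv_nonneg_le f f'); [apply Rmax_r|intros; apply D; lra|intros; left; apply P; lra]. }
  specialize (HA z (Rmax_l _ _)). rewrite Rminus_0_r in HA. apply Rabs_def2 in HA. lra.
Qed.

Lemma incr_tends_minf0_pos f f' a : (forall x, x <= a -> derivable_pt_lim f x (f' x)) ->
  (forall x, x < a -> 0 < f' x) -> tends_minf f 0 -> 0 < f a.
Proof.
  intros D P T. rewrite <- (Ropp_involutive a).
  enough (- f (- - a) < 0) by lra.
  apply (incr_tends_pinf0_neg (fun z => - f (- z)) (fun z => f' (- z))).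
  - intros x Hx. eapply derivable_pt_lim_eq.
    + apply derivable_pt_lim_opp, derivable_pt_lim_reflect, D; lra.
    + ring.
  - intros x Hx; apply P; lra.
  - apply tends_pinf_opp0 with (f := fun z => f (- z)). now apply tends_minf_reflect.
Qed.

(** * Sturm comparison *)

Set Implicit Arguments.
Record decaying_solution (q M M1 M2 : R -> R) : Prop := {
  dsol_deriv : forall z, derivable_pt_lim M z (M1 z);
  dsol_deriv1 : forall z, derivable_pt_lim M1 z (M2 z);
  dsol_eq : forall z, M2 z = q z * M z;
  dsol_decays : decays M;
  dsol_decays1 : decays M1 }.
Unset Implicit Arguments.

Lemma decaying_solution_continuity q M M1 M2 :
  decaying_solution q M M1 M2 -> continuity M.
Proof. intros HM x. eapply derivable_pt_lim_continuity_pt, dsol_deriv, HM. Qed.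

Lemma decaying_solution_opp q M M1 M2 : decaying_solution q M M1 M2 ->
  decaying_solution q (fun z => - M z) (fun z => - M1 z) (fun z => - M2 z).
Proof.
  intros [D1 D2 E T T1]. split.
  - intros; now apply derivable_pt_lim_opp.
  - intros; now apply derivable_pt_lim_opp.
  - intros; rewrite E; ring.
  - now apply decays_opp.
  - now apply decays_opp.
Qed.

Lemma decaying_solution_reflect q M M1 M2 : decaying_solution q M M1 M2 ->
  decaying_solution (fun z => q (- z)) (fun z => M (- z))
    (fun z => - M1 (- z)) (fun z => M2 (- z)).
Proof.
  intros [D1 D2 E T T1]. split.
  - intros; now apply derivable_pt_lim_reflect.
  - intros z. rewrite <- (Ropp_involutive (M2 (- z))).
    now apply derivable_pt_lim_opp, derivable_pt_lim_reflect.
  - intros; apply E.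
  - now apply decays_reflect.
  - now apply (decays_reflect (fun z => - M1 z)), decays_opp.
Qed.

Definition wronskian (f f1 g g1 : R -> R) (z : R) : R := f1 z * g z - f z * g1 z.

Lemma wronskian_deriv q p M M1 M2 N N1 N2 z :
  decaying_solution q M M1 M2 -> decaying_solution p N N1 N2 ->
  derivable_pt_lim (wronskian M M1 N N1) z ((q z - p z) * M z * N z).
Proof.
  intros [D1 D2 E _ _] [P1 P2 F _ _]. unfold wronskian. eapply derivable_pt_lim_eq.
  - apply derivable_pt_lim_minus; apply derivable_pt_lim_mult; auto.
  - rewrite E, F. ring.
Qed.

Lemma wronskian_decays q p M M1 M2 N N1 N2 :
  decaying_solution q M M1 M2 -> decaying_solution p N N1 N2 -> decays (wronskian M M1 N N1).
Proof.
  intros [_ _ _ T T1] [_ _ _ P P1].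
  apply decays_minus; now apply decays_mult.
Qed.

Section SturmComparison.
Variables (q q0 M M1 M2 phi phi1 phi2 : R -> R).
Hypotheses (HM : decaying_solution q M M1 M2) (Hphi : decaying_solution q0 phi phi1 phi2)
  (Hq : forall z, q0 z < q z).

Let U := wronskian M M1 phi phi1.
Let U' z := (q z - q0 z) * M z * phi z.

Let U_deriv z : derivable_pt_lim U z (U' z).
Proof. exact (wronskian_deriv q q0 M M1 M2 phi phi1 phi2 z HM Hphi). Qed.

Let U'_pos z : 0 < M z -> 0 < phi z -> 0 < U' z.
Proof. intros. unfold U'. specialize (Hq z). apply Rmult_lt_0_compat; [|auto]. nra. Qed.

(* On a nodal interval [(a, b)] of [M] where [phi > 0], the Wronskian increases strictly,
   from [U a >= 0] to [U b <= 0] (or to its limit [0] when [b = +oo]). *)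
Lemma sturm_nodal_right z0 z1 : (forall z, z0 < z -> 0 < phi z) ->
  M z0 = 0 -> z0 < z1 -> 0 < M z1 -> False.
Proof.
  intros Pphi Mz0 Hz1 Mz1.
  assert (CM := decaying_solution_continuity q M M1 M2 HM).
  destruct (last_zero M z0 z1) as [a [Ha [Ma Mpos]]]; auto; try lra.
  assert (Ua : 0 <= U a).
  { unfold U, wronskian. rewrite Ma, Rmult_0_l, Rminus_0_r.
    apply Rmult_le_pos.
    - apply (derivable_pt_lim_nonneg_at_zero M a (M1 a) z1); auto; try lra.
      + intros; apply Mpos; lra.
      + apply (dsol_deriv HM).
    - destruct (Req_dec a z0) as [->|]; [|left; apply Pphi; lra].
      apply continuity_pt_nonneg_right; auto.
      apply (decaying_solution_continuity q0 phi phi1 phi2 Hphi). }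
  destruct (classic (exists t, z1 < t /\ M t <= 0)) as [[t [Ht Mt]]|Nt].
  - destruct (first_zero M z1 t) as [b [Hb [Mb Mpos']]]; auto; try lra.
    assert (Hab : forall y, a < y < b -> 0 < M y).
    { intros y Hy. destruct (Rle_dec y z1); [apply Mpos|apply Mpos']; lra. }
    assert (Ub : U b <= 0).
    { unfold U, wronskian. rewrite Mb, Rmult_0_l, Rminus_0_r.
      assert (0 < phi b) by (apply Pphi; lra).
      assert (M1 b <= 0).
      { apply (derivable_pt_lim_nonpos_at_zero M b (M1 b) a); auto; try lra.
        apply (dsol_deriv HM). }
      nra. }
    assert (U a < U b).
    { apply (deriv_pos_lt U U'); try lra; intros; [apply U_deriv|].
      apply U'_pos; [apply Hab|apply Pphi]; lra. }
    lra.
  - assert (U a < 0); [|lra].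
    apply (incr_tends_pinf0_neg U U'); [intros; apply U_deriv| |].
    + intros y Hy. apply U'_pos; [|apply Pphi; lra].
      destruct (Rle_dec y z1); [apply Mpos; lra|].
      apply Rnot_le_lt; intros Hy'; apply Nt; exists y; split; lra.
    + apply (wronskian_decays q q0 M M1 M2 phi phi1 phi2 HM Hphi).
Qed.

End SturmComparison.

Lemma sturm_right q q0 M M1 M2 phi phi1 phi2 z0 :
  decaying_solution q M M1 M2 -> decaying_solution q0 phi phi1 phi2 ->
  (forall z, q0 z < q z) -> (forall z, continuity_pt q z) -> (exists z, M z <> 0) ->
  M z0 = 0 -> exists z, z0 < z /\ phi z = 0.
Proof.
  intros HM Hphi Hq Cq [zn Hzn] Mz0. apply NNPP; intros Nphi.
  assert (Hz1 : exists z1, z0 < z1 /\ M z1 <> 0).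
  { apply NNPP; intros N. apply Hzn.
    assert (V : forall z, z0 < z -> M z = 0).
    { intros z Hz. apply NNPP; intros Mz; apply N; now exists z. }
    apply (ode_unique M M1 M2 q (z0 + 1)); try apply HM; auto.
    - apply V; lra.
    - apply (derivable_pt_lim_locally_const M (z0 + 1) _ z0 (z0 + 2) 0); try lra.
      + intros; apply V; lra.
      + apply HM. }
  destruct Hz1 as [z1 [Hz1 Mz1]].
  assert (K : forall p p1 p2, decaying_solution q0 p p1 p2 ->
             (forall z, z0 < z -> 0 < p z) -> False).
  { intros p p1 p2 Hp Pp. destruct (Rlt_dec 0 (M z1)).
    - exact (sturm_nodal_right q q0 M M1 M2 p p1 p2 HM Hp Hq z0 z1 Pp Mz0 Hz1 r).
    - apply (sturm_nodal_right q q0 _ _ _ p p1 p2 (decaying_solution_opp _ _ _ _ HM) Hp Hq z0 z1);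
        auto; [rewrite Mz0; ring|lra]. }
  destruct (continuous_nonzero_sign phi (fun z => z0 < z) (z0 + 1)) as [P|P].
  - now apply (decaying_solution_continuity q0 phi phi1 phi2).
  - lra.
  - intros; lra.
  - intros z Hz Pz; apply Nphi; now exists z.
  - exact (K phi phi1 phi2 Hphi P).
  - apply (K _ _ _ (decaying_solution_opp _ _ _ _ Hphi)).
    intros z Hz; specialize (P z Hz); lra.
Qed.

Lemma sturm_left q q0 M M1 M2 phi phi1 phi2 z0 :
  decaying_solution q M M1 M2 -> decaying_solution q0 phi phi1 phi2 ->
  (forall z, q0 z < q z) -> (forall z, continuity_pt q z) -> (exists z, M z <> 0) ->
  M z0 = 0 -> exists z, z < z0 /\ phi z = 0.
Proof.
  intros HM Hphi Hq Cq [zn Hzn] Mz0.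
  destruct (sturm_right _ _ _ _ _ _ _ _ (- z0) (decaying_solution_reflect _ _ _ _ HM)
              (decaying_solution_reflect _ _ _ _ Hphi)) as [z [Hz Pz]].
  - intros; apply Hq.
  - intros z. apply (continuity_pt_comp (fun y => - y) q z); [|apply Cq].
    apply (derivable_pt_lim_continuity_pt _ _ (-1)), derivable_pt_lim_opp, derivable_pt_lim_id.
  - exists (- zn). now rewrite Ropp_involutive.
  - now rewrite Ropp_involutive.
  - exists (- z). split; [lra|auto].
Qed.

(* A zero of [M] would force a zero of [phi] on each side of it. *)
Lemma sturm_nonvanishing q q0 M M1 M2 phi phi1 phi2 :
  decaying_solution q M M1 M2 -> decaying_solution q0 phi phi1 phi2 ->
  (forall z, q0 z < q z) -> (forall z, continuity_pt q z) -> (exists z, M z <> 0) ->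
  (forall a b, phi a = 0 -> phi b = 0 -> a = b) -> forall z, M z <> 0.
Proof.
  intros HM Hphi Hq Cq Hnt Huniq z0 Mz0.
  destruct (sturm_right q q0 M M1 M2 phi phi1 phi2 z0) as [b [Hb Pb]]; auto.
  destruct (sturm_left q q0 M M1 M2 phi phi1 phi2 z0) as [a [Ha Pa]]; auto.
  specialize (Huniq a b Pa Pb). lra.
Qed.

(* The Wronskian of two such solutions would be strictly monotone yet vanish at both ends. *)
Lemma nonvanishing_solutions_ordered_absurd qa qb Ma Ma1 Ma2 Mb Mb1 Mb2 :
  decaying_solution qa Ma Ma1 Ma2 -> decaying_solution qb Mb Mb1 Mb2 ->
  (forall z, qb z < qa z) -> (forall z, Ma z <> 0) -> (forall z, Mb z <> 0) -> False.
Proof.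
  intros HA HB Hq Na Nb.
  assert (K : forall N N1 N2, decaying_solution qb N N1 N2 -> (forall z, 0 < Ma z * N z) -> False).
  { intros N N1 N2 HN P.
    set (W := wronskian Ma Ma1 N N1).
    set (W' := fun z => (qa z - qb z) * Ma z * N z).
    assert (DW : forall z, derivable_pt_lim W z (W' z))
      by (intros; now apply (wronskian_deriv qa qb _ _ Ma2 _ _ N2)).
    assert (W'pos : forall z, 0 < W' z).
    { intros z. specialize (P z). specialize (Hq z). unfold W'. rewrite Rmult_assoc. nra. }
    destruct (wronskian_decays qa qb _ _ Ma2 _ _ N2 HA HN) as [Tp Tm].
    assert (W 0 < 0) by (apply (incr_tends_pinf0_neg W W'); auto).
    assert (0 < W 0) by (apply (incr_tends_minf0_pos W W'); auto).
    lra. }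
  destruct (continuous_nonzero_sign (fun z => Ma z * Mb z) (fun _ => True) 0) as [P|P].
  - intros x. apply continuity_pt_mult; [apply (decaying_solution_continuity _ _ _ _ HA)
                                         |apply (decaying_solution_continuity _ _ _ _ HB)].
  - exact I.
  - intros; exact I.
  - intros z _. now apply Rmult_integral_contrapositive.
  - apply (K _ _ _ HB). intros z; now apply P.
  - apply (K _ _ _ (decaying_solution_opp _ _ _ _ HB)). intros z; specialize (P z I); nra.
Qed.

(** * The eigenvalue equation *)

Lemma pot_pos nu eta z : -1 < nu -> 0 < pot nu eta z.
Proof. intros Hnu. unfold pot, Rpower. apply Rmult_lt_0_compat; [lra|apply exp_pos]. Qed.

Lemma pot_continuity nu eta z : (forall z, 0 < eta z) -> (forall z, continuity_pt eta z) ->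
  continuity_pt (pot nu eta) z.
Proof.
  intros Hpos C. unfold pot. apply (continuity_pt_scal (fun z => Rpower (eta z) _)).
  apply (continuity_pt_comp eta (fun u => Rpower u (- (nu + 3)))); auto.
  eapply derivable_pt_lim_continuity_pt, derivable_pt_lim_power, Hpos.
Qed.

(* [gen_eigen] reads [M'' = eig_pot mu * M]. *)
Definition eig_pot (g nu kappa s : R) (eta : R -> R) (mu z : R) : R :=
  (g - mu + s ^ 2 / (mu - pot nu eta z)) / kappa.

Section EigenPotential.
Variables (g nu kappa s : R) (eta : R -> R).
Hypotheses (Hnu : -1 < nu) (Hkappa : 0 < kappa).

Lemma eig_pot_continuity mu z : mu <= 0 -> (forall z, 0 < eta z) ->
  (forall z, continuity_pt eta z) -> continuity_pt (eig_pot g nu kappa s eta mu) z.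
Proof.
  intros Hmu Hpos C. unfold eig_pot, Rdiv at 2.
  apply continuity_pt_mult; [|apply continuity_pt_const; now intros ? ?].
  apply continuity_pt_plus; [apply continuity_pt_const; now intros ? ?|].
  apply continuity_pt_div; [apply continuity_pt_const; now intros ? ?| |].
  - apply continuity_pt_minus; [apply continuity_pt_const; now intros ? ?|].
    now apply pot_continuity.
  - pose proof (pot_pos nu eta z Hnu). lra.
Qed.

Lemma eig_pot_decreasing mu1 mu2 z : mu1 < mu2 -> mu2 <= 0 ->
  eig_pot g nu kappa s eta mu2 z < eig_pot g nu kappa s eta mu1 z.
Proof.
  intros H12 H2. unfold eig_pot. pose proof (pot_pos nu eta z Hnu).
  apply Rmult_lt_compat_r; [now apply Rinv_0_lt_compat|].
  assert (/ (pot nu eta z - mu1) < / (pot nu eta z - mu2)) by (apply Rinv_lt_contravar; nra).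
  replace (s ^ 2 / (mu2 - pot nu eta z)) with (- (s ^ 2 * / (pot nu eta z - mu2))) by (field; lra).
  replace (s ^ 2 / (mu1 - pot nu eta z)) with (- (s ^ 2 * / (pot nu eta z - mu1))) by (field; lra).
  pose proof (pow2_ge_0 s). nra.
Qed.

Lemma eig_pot_bound mu z : mu < 0 ->
  Rabs (eig_pot g nu kappa s eta mu z) <= (Rabs (g - mu) + s ^ 2 / (- mu)) / kappa.
Proof.
  intros Hmu. unfold eig_pot. pose proof (pot_pos nu eta z Hnu).
  unfold Rdiv at 1 3. rewrite Rabs_mult, Rabs_inv, (Rabs_right kappa) by lra.
  apply Rmult_le_compat_r; [left; now apply Rinv_0_lt_compat|].
  eapply Rle_trans; [apply Rabs_triang|]. apply Rplus_le_compat_l.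
  unfold Rdiv. rewrite Rabs_mult, Rabs_inv, (Rabs_right (s ^ 2)) by (apply Rle_ge, pow2_ge_0).
  rewrite (Rabs_left (mu - pot nu eta z)) by lra.
  apply Rmult_le_compat_l; [apply pow2_ge_0|]. apply Rinv_le_contravar; lra.
Qed.

End EigenPotential.

Lemma eig_pot_spec g nu kappa s eta mu z m m2 : 0 < kappa ->
  kappa * m2 = (g - mu + s ^ 2 / (mu - pot nu eta z)) * m ->
  m2 = eig_pot g nu kappa s eta mu z * m.
Proof.
  intros Hk E. unfold eig_pot. set (X := g - mu + _) in *.
  apply Rmult_eq_reg_l with kappa; [|lra]. rewrite E. field. lra.
Qed.

Lemma gen_eigen_decaying_solution beta nu kappa s eta mu M : 0 < kappa ->
  gen_eigen beta nu kappa s eta mu M ->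
  exists M1 M2, decaying_solution (eig_pot (gam beta nu) nu kappa s eta mu) M M1 M2.
Proof.
  intros Hk (M1 & M2 & D1 & D2 & _ & _ & T1 & T2 & T3 & T4 & Heq).
  exists M1, M2. split; auto; try now split. intros; now apply eig_pot_spec.
Qed.

(** * The derivative of the soliton profile *)

Set Implicit Arguments.
Record profile (g nu kappa eta_inf s : R) (w eta : R -> R) (dw deta : nat -> R -> R) : Prop := {
  prof_dw0 : forall x, dw O x = w x;
  prof_dw : forall n x, derivable_pt_lim (dw n) x (dw (S n) x);
  prof_deta0 : forall x, deta O x = eta x;
  prof_deta : forall n x, derivable_pt_lim (deta n) x (deta (S n) x);
  prof_eta_pos : forall z, 0 < eta z;
  prof_nonconst : exists z1 z2, w z1 <> w z2 \/ eta z1 <> eta z2;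
  prof_eq1 : forall z, s * w z + Rpower eta_inf (- (nu + 2)) - Rpower (eta z) (- (nu + 2)) = 0;
  prof_eq2 : forall z, g * w z - kappa * dw 2%nat z + s * (eta z - eta_inf) = 0;
  prof_w_pinf : tends_pinf w 0;
  prof_w_minf : tends_minf w 0;
  prof_eta_pinf : tends_pinf eta eta_inf;
  prof_eta_minf : tends_minf eta eta_inf }.
Unset Implicit Arguments.

Lemma soliton_profile beta nu kappa eta_inf s w eta : soliton beta nu kappa eta_inf s w eta ->
  exists dw deta, profile (gam beta nu) nu kappa eta_inf s w eta dw deta.
Proof.
  intros (dw & deta & [? ?] & [? ?] & ? & ? & ? & ? & ? & ? & ? & ?).
  exists dw, deta. now constructor.
Qed.

Lemma profile_opp g nu kappa eta_inf s w eta dw deta :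
  profile g nu kappa eta_inf s w eta dw deta ->
  profile g nu kappa eta_inf (- s) (fun z => - w z) eta (fun n z => - dw n z) deta.
Proof.
  intros [H0 Hd E0 Ed Hpos [z1 [z2 Hnc]] R1 R2 Tw1 Tw2 Te1 Te2]. constructor; auto.
  - intros; now rewrite H0.
  - intros; now apply derivable_pt_lim_opp.
  - exists z1, z2. destruct Hnc; [left|right]; auto. intros E; apply H; lra.
  - intros z. specialize (R1 z). nra.
  - intros z. specialize (R2 z). nra.
  - now apply tends_pinf_opp0.
  - apply tends_minf_reflect, (tends_pinf_opp0 (fun z => w (- z))).
    now apply tends_minf_reflect.
Qed.

(* Just below [W z] the function [G] would be negative, yet [W] attains those values. *)
Lemma level_increasing_min W G F z : continuity W -> (forall y, 0 <= G (W y)) ->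
  (forall u y1 y2, W y1 <= u <= W y2 -> derivable_pt_lim G u (F u)) ->
  continuity_pt F (W z) -> G (W z) = 0 -> 0 < F (W z) -> forall y, W z <= W y.
Proof.
  intros C Gnn DG CF Gz Fz y. apply Rnot_lt_le; intros Hy.
  destruct (continuity_pt_pos_nbhd F (W z) CF Fz) as [d [Hd Fpos]].
  set (t := Rmax (W y) (W z - d / 2)).
  assert (Ht : W y <= t < W z) by (split; [apply Rmax_l|apply Rmax_lub_lt; lra]).
  destruct (continuity_attains W y z t C ltac:(lra)) as [y' Hy'].
  destruct (MVT_cor2 G F t (W z)) as [xi [E Hxi]]; [lra|intros c Hc; apply (DG c y z); lra|].
  assert (W z - d / 2 <= t) by apply Rmax_r.
  assert (0 < F xi) by (apply Fpos; apply Rabs_def1; lra).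
  specialize (Gnn y'). rewrite Hy' in Gnn. nra.
Qed.

Lemma level_decreasing_max W G F z : continuity W -> (forall y, 0 <= G (W y)) ->
  (forall u y1 y2, W y1 <= u <= W y2 -> derivable_pt_lim G u (F u)) ->
  continuity_pt F (W z) -> G (W z) = 0 -> F (W z) < 0 -> forall y, W y <= W z.
Proof.
  intros C Gnn DG CF Gz Fz y.
  enough (- W z <= - W y) by lra.
  apply (level_increasing_min (fun y => - W y) (fun u => G (- u)) (fun u => - F (- u))).
  - intros x. now apply continuity_pt_opp.
  - intros y'. now rewrite Ropp_involutive.
  - intros u y1 y2 Hu. apply derivable_pt_lim_reflect, (DG _ y2 y1); lra.
  - apply continuity_pt_opp, (continuity_pt_comp (fun u => - u) F).
    + apply (derivable_pt_lim_continuity_pt _ _ (-1)), derivable_pt_lim_opp, derivable_pt_lim_id.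
    + now rewrite Ropp_involutive.
  - now rewrite Ropp_involutive.
  - rewrite Ropp_involutive. lra.
Qed.

Section Profile.
Variables (g nu kappa eta_inf s : R) (w eta : R -> R) (dw deta : nat -> R -> R).
Hypotheses (Hnu : -1 < nu) (Hkappa : 0 < kappa) (Heta_inf : 0 < eta_inf)
  (P : profile g nu kappa eta_inf s w eta dw deta).

Lemma w_deriv x : derivable_pt_lim w x (dw 1%nat x).
Proof. apply (derivable_pt_lim_ext (dw O)); apply P. Qed.

Lemma eta_deriv x : derivable_pt_lim eta x (deta 1%nat x).
Proof. apply (derivable_pt_lim_ext (deta O)); apply P. Qed.

Lemma eta_continuity : continuity eta.
Proof. intros x. eapply derivable_pt_lim_continuity_pt, eta_deriv. Qed.

Lemma w_continuity : continuity w.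
Proof. intros x. eapply derivable_pt_lim_continuity_pt, w_deriv. Qed.

Lemma eta_deriv_rel z : s * dw 1%nat z + pot nu eta z * deta 1%nat z = 0.
Proof.
  assert (D : derivable_pt_lim
    (fun z => s * w z + Rpower eta_inf (- (nu + 2)) - Rpower (eta z) (- (nu + 2))) z
    (s * dw 1%nat z + 0 - (- (nu + 2)) * Rpower (eta z) (- (nu + 2) - 1) * deta 1%nat z)).
  { apply derivable_pt_lim_minus; [apply derivable_pt_lim_plus|].
    - apply derivable_pt_lim_scal, w_deriv.
    - apply derivable_pt_lim_const.
    - apply derivable_pt_lim_Rpower_comp; [apply P|apply eta_deriv]. }
  assert (D0 := derivable_pt_lim_locally_const _ z _ (z - 1) (z + 1) 0 ltac:(lra)
                  ltac:(intros; apply (prof_eq1 P)) D).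
  unfold pot. replace (- (nu + 2) - 1) with (- (nu + 3)) in D0 by ring. lra.
Qed.

(* Translation invariance: [w'] solves the eigenvalue equation at [mu = 0]. *)
Lemma dw3_eq z : dw 3%nat z = eig_pot g nu kappa s eta 0 z * dw 1%nat z.
Proof.
  assert (D : derivable_pt_lim (fun z => g * w z - kappa * dw 2%nat z + s * (eta z - eta_inf)) z
    (g * dw 1%nat z - kappa * dw 3%nat z + s * (deta 1%nat z - 0))).
  { apply derivable_pt_lim_plus; [apply derivable_pt_lim_minus|].
    - apply derivable_pt_lim_scal, w_deriv.
    - apply derivable_pt_lim_scal, P.
    - apply derivable_pt_lim_scal, derivable_pt_lim_minus;
        [apply eta_deriv|apply derivable_pt_lim_const]. }
  assert (D0 := derivable_pt_lim_locally_const _ z _ (z - 1) (z + 1) 0 ltac:(lra)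
                  ltac:(intros; apply (prof_eq2 P)) D).
  pose proof (eta_deriv_rel z). pose proof (pot_pos nu eta z Hnu).
  apply eig_pot_spec; [lra|].
  replace (deta 1%nat z) with (- (s * dw 1%nat z) / pot nu eta z) in D0
    by (apply (Rmult_eq_reg_l (pot nu eta z)); [field_simplify|]; lra).
  replace ((g - 0 + s ^ 2 / (0 - pot nu eta z)) * dw 1%nat z)
    with (g * dw 1%nat z + s * (- (s * dw 1%nat z) / pot nu eta z)) by (field; lra).
  lra.
Qed.

Lemma dw2_decays : decays (dw 2%nat).
Proof.
  apply (decays_ext (fun z => / kappa * (g * w z + s * (eta z - eta_inf)))).
  - intros z. pose proof (prof_eq2 P z).
    apply Rmult_eq_reg_l with kappa; [|lra]. rewrite <- Rmult_assoc, Rinv_r, Rmult_1_l by lra. lra.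
  - apply decays_scal, decays_plus; apply decays_scal.
    + split; apply P.
    + apply decays_sub_limit; apply P.
Qed.

Lemma dw1_decays : decays (dw 1%nat).
Proof.
  destruct dw2_decays as [T1 T2]. split.
  - apply (tends_pinf_deriv0 w _ (dw 2%nat)); [apply w_deriv|apply P|apply P|auto].
  - apply tends_minf_reflect.
    apply (tends_pinf_deriv0 (fun z => - w (- z)) _ (fun z => - dw 2%nat (- z))).
    + intros z. rewrite <- (Ropp_involutive (dw 1%nat (- z))).
      apply derivable_pt_lim_opp, derivable_pt_lim_reflect, w_deriv.
    + intros; apply derivable_pt_lim_reflect, P.
    + apply (tends_pinf_opp0 (fun z => w (- z))), tends_minf_reflect, P.
    + apply (tends_pinf_opp0 (fun z => dw 2%nat (- z))). now apply tends_minf_reflect.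
Qed.

Lemma deriv_decaying_solution :
  decaying_solution (eig_pot g nu kappa s eta 0) (dw 1%nat) (dw 2%nat) (dw 3%nat).
Proof.
  split; [apply P|apply P|apply dw3_eq|apply dw1_decays|apply dw2_decays].
Qed.

Let A := Rpower eta_inf (- (nu + 2)).

(* [eta] as a function of [w], from the first profile equation. *)
Let eta_of x := Rpower (A + s * x) (- / (nu + 2)).

Let force x := g * x + s * (eta_of x - eta_inf).
Let force' x := g - s ^ 2 / (nu + 2) * Rpower (A + s * x) (- / (nu + 2) - 1).
Let energy x := g * x ^ 2 / 2
  + (nu + 2) / (nu + 1)
    * (Rpower (A + s * x) ((nu + 1) / (nu + 2)) - Rpower A ((nu + 1) / (nu + 2)))
  - s * eta_inf * x.

Lemma base_pos z : 0 < A + s * w z.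
Proof.
  replace (A + s * w z) with (Rpower (eta z) (- (nu + 2))).
  - unfold Rpower; apply exp_pos.
  - pose proof (prof_eq1 P z). unfold A. lra.
Qed.

Lemma eta_eq z : eta z = eta_of (w z).
Proof.
  unfold eta_of. replace (A + s * w z) with (Rpower (eta z) (- (nu + 2)))
    by (pose proof (prof_eq1 P z); unfold A; lra).
  rewrite Rpower_mult. replace (- (nu + 2) * - / (nu + 2)) with 1 by (field; lra).
  now rewrite Rpower_1 by apply P.
Qed.

Lemma eta_of_0 : eta_of 0 = eta_inf.
Proof.
  unfold eta_of, A. rewrite Rmult_0_r, Rplus_0_r, Rpower_mult.
  replace (- (nu + 2) * - / (nu + 2)) with 1 by (field; lra). now rewrite Rpower_1.
Qed.

Lemma force_deriv x : 0 < A + s * x -> derivable_pt_lim force x (force' x).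
Proof.
  intros Hx. unfold force, force', eta_of. eapply derivable_pt_lim_eq.
  - apply derivable_pt_lim_plus; [apply derivable_pt_lim_scal, derivable_pt_lim_id|].
    apply derivable_pt_lim_scal, derivable_pt_lim_minus; [|apply derivable_pt_lim_const].
    apply (derivable_pt_lim_Rpower_comp (fun y => A + s * y)); auto.
    apply derivable_pt_lim_plus; [apply derivable_pt_lim_const|].
    apply derivable_pt_lim_scal, derivable_pt_lim_id.
  - field. lra.
Qed.

Lemma energy_deriv x : 0 < A + s * x -> derivable_pt_lim energy x (force x).
Proof.
  intros Hx. unfold energy, force, eta_of. eapply derivable_pt_lim_eq.
  - apply derivable_pt_lim_minus; [apply derivable_pt_lim_plus|].
    + apply (derivable_pt_lim_div (fun y => g * y ^ 2) (fun _ => 2));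
        [|apply derivable_pt_lim_const|lra].
      apply derivable_pt_lim_scal, derivable_pt_lim_pow.
    + apply derivable_pt_lim_scal, derivable_pt_lim_minus; [|apply derivable_pt_lim_const].
      apply (derivable_pt_lim_Rpower_comp (fun y => A + s * y)); auto.
      apply derivable_pt_lim_plus; [apply derivable_pt_lim_const|].
      apply derivable_pt_lim_scal, derivable_pt_lim_id.
    + apply derivable_pt_lim_scal, derivable_pt_lim_id.
  - replace ((nu + 1) / (nu + 2) - 1) with (- / (nu + 2)) by (field; lra).
    unfold Rsqr. simpl. field. lra.
Qed.

Lemma kappa_dw2 z : kappa * dw 2%nat z = force (w z).
Proof. unfold force. rewrite <- eta_eq. pose proof (prof_eq2 P z). lra. Qed.

Lemma energy_conservation z : kappa / 2 * dw 1%nat z ^ 2 = energy (w z).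
Proof.
  set (H := fun z => kappa / 2 * (dw 1%nat z * dw 1%nat z) - energy (w z)).
  assert (DH : forall z, derivable_pt_lim H z 0).
  { intros t. unfold H. eapply derivable_pt_lim_eq.
    - apply derivable_pt_lim_minus.
      + apply derivable_pt_lim_scal, derivable_pt_lim_mult; apply P.
      + apply (derivable_pt_lim_comp w energy); [apply w_deriv|apply energy_deriv, base_pos].
    - rewrite <- kappa_dw2. field. }
  assert (K : forall y, H y = H 0) by (intros; apply (deriv_zero_const H (fun _ => 0)); auto).
  assert (TH : tends_pinf H 0).
  { apply (tends_pinf_plus0 _ (fun z => - energy (w z))).
    - apply tends_pinf_scal0, tends_pinf_mult0; apply dw1_decays.
    - apply (tends_pinf_opp0 (fun z => energy (w z))).
      assert (E0 : energy 0 = 0) by (unfold energy; rewrite Rmult_0_r, Rplus_0_r; field; lra).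
      rewrite <- E0. apply tends_pinf_comp_continuous; [|apply P].
      apply (derivable_pt_lim_continuity_pt _ _ (force 0)), energy_deriv.
      rewrite Rmult_0_r, Rplus_0_r. unfold A, Rpower. apply exp_pos. }
  pose proof (tends_pinf_const_zero H (H 0) K TH) as E0.
  pose proof (K z) as E1. rewrite E0 in E1. unfold H in E1. simpl. lra.
Qed.

Lemma deriv_simple_zero z : dw 1%nat z = 0 -> dw 2%nat z <> 0.
Proof.
  intros Z1 Z2.
  assert (V : forall y, dw 1%nat y = 0).
  { apply (ode_unique (dw 1%nat) (dw 2%nat) (dw 3%nat) (eig_pot g nu kappa s eta 0) z); auto;
      try apply deriv_decaying_solution.
    intros; apply eig_pot_continuity; auto; [lra|apply P|apply eta_continuity]. }
  assert (Wc : forall y, w y = w 0) by (intros; apply (deriv_zero_const w (dw 1%nat) w_deriv V)).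
  assert (W0 : w 0 = 0) by (apply (tends_pinf_const_zero w _ Wc), P).
  destruct (prof_nonconst P) as [z1 [z2 [N|N]]]; apply N.
  - now rewrite Wc, (Wc z2).
  - now rewrite !eta_eq, Wc, (Wc z2).
Qed.

Lemma base_pos_between u y1 y2 : w y1 <= u <= w y2 -> 0 < A + s * u.
Proof.
  intros Hu. destruct (continuity_attains w y1 y2 u w_continuity Hu) as [y <-]. apply base_pos.
Qed.

Section PositiveSpeed.
Hypothesis Hs : 0 < s.

Lemma force'_increasing u1 u2 : 0 <= u1 < u2 -> force' u1 < force' u2.
Proof.
  intros H. unfold force'. assert (HA : 0 < A) by (unfold A, Rpower; apply exp_pos).
  replace (- / (nu + 2) - 1) with (- (/ (nu + 2) + 1)) by ring. rewrite !Rpower_Ropp.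
  assert (He : 0 < / (nu + 2) + 1) by (pose proof (Rinv_0_lt_compat (nu + 2)); lra).
  assert (Rpower (A + s * u1) (/ (nu + 2) + 1) < Rpower (A + s * u2) (/ (nu + 2) + 1))
    by (apply Rlt_Rpower_l; auto; split; nra).
  assert (/ Rpower (A + s * u2) (/ (nu + 2) + 1) < / Rpower (A + s * u1) (/ (nu + 2) + 1)).
  { apply Rinv_lt_contravar; auto. apply Rmult_lt_0_compat; unfold Rpower; apply exp_pos. }
  assert (0 < s ^ 2 / (nu + 2)) by (apply Rdiv_lt_0_compat; [nra|lra]). nra.
Qed.

(* [force] is strictly convex on [x >= 0] and vanishes at 0, so [energy], its primitive
   vanishing at 0, cannot vanish again at a point where [force] is negative. *)
Lemma energy_root_force_nonneg x : 0 < x -> energy x = 0 -> 0 <= force x.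
Proof.
  intros Hx Ex. apply Rnot_lt_le; intros Fx.
  assert (Dom : forall u, 0 <= u -> 0 < A + s * u).
  { intros u Hu. assert (0 < A) by (unfold A, Rpower; apply exp_pos). nra. }
  assert (E0 : energy 0 = 0) by (unfold energy; rewrite Rmult_0_r, Rplus_0_r; field; lra).
  assert (F0 : force 0 = 0) by (unfold force; rewrite eta_of_0; ring).
  destruct (MVT_cor2 energy force 0 x) as [xi [E1 Hxi]];
    [lra|intros; apply energy_deriv, Dom; lra|].
  assert (Fxi : force xi = 0) by (rewrite Ex, E0 in E1; nra).
  destruct (MVT_cor2 force force' 0 xi) as [th1 [E2 H1]];
    [lra|intros; apply force_deriv, Dom; lra|].
  destruct (MVT_cor2 force force' xi x) as [th2 [E3 H2]];
    [lra|intros; apply force_deriv, Dom; lra|].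
  assert (force' th1 = 0) by (rewrite Fxi, F0 in E2; nra).
  assert (force' th2 < 0) by (rewrite Fxi in E3; nra).
  assert (force' th1 < force' th2) by (apply force'_increasing; lra). lra.
Qed.

Lemma critical_point_global_min z : dw 1%nat z = 0 -> 0 < force (w z) /\ forall y, w z <= w y.
Proof.
  intros Z.
  assert (Gnn : forall y, 0 <= energy (w y)).
  { intros y. rewrite <- energy_conservation. pose proof (pow2_ge_0 (dw 1%nat y)). nra. }
  assert (Gz : energy (w z) = 0) by (rewrite <- energy_conservation, Z; ring).
  assert (DG : forall u y1 y2, w y1 <= u <= w y2 -> derivable_pt_lim energy u (force u))
    by (intros u y1 y2 Hu; apply energy_deriv, (base_pos_between u y1 y2 Hu)).
  assert (CF : continuity_pt force (w z))
    by (eapply derivable_pt_lim_continuity_pt, force_deriv, base_pos).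
  assert (Fnz : force (w z) <> 0).
  { rewrite <- kappa_dw2. pose proof (deriv_simple_zero z Z).
    apply Rmult_integral_contrapositive; split; lra. }
  destruct (Rtotal_order (force (w z)) 0) as [Fneg|[?|Fpos]]; [exfalso| contradiction |].
  - assert (Wmax := level_decreasing_max w energy force z w_continuity Gnn DG CF Gz Fneg).
    assert (W0 : 0 <= w z).
    { apply Rnot_lt_le; intros Hw. pose proof (prof_w_pinf P) as T.
      destruct (T (- w z)) as [B HB]; [lra|].
      specialize (HB B (Rle_refl _)). specialize (Wmax B). rewrite Rminus_0_r in HB.
      apply Rabs_def2 in HB. lra. }
    destruct W0 as [W0|W0].
    + pose proof (energy_root_force_nonneg (w z) W0 Gz). lra.
    + apply Fnz. rewrite <- W0. unfold force. rewrite eta_of_0. ring.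
  - split; auto. exact (level_increasing_min w energy force z w_continuity Gnn DG CF Gz Fpos).
Qed.

(* Two critical points would be global minima; the maximum of [w] between them is then
   either a third critical point (hence a minimum too) or [w] is constant there. *)
Lemma deriv_zero_unique a b : dw 1%nat a = 0 -> dw 1%nat b = 0 -> a = b.
Proof.
  assert (K : forall a b, a < b -> dw 1%nat a = 0 -> dw 1%nat b = 0 -> False).
  { clear a b. intros a b Hab Za Zb.
    destruct (critical_point_global_min a Za) as [_ Ma].
    destruct (critical_point_global_min b Zb) as [_ Mb].
    assert (Eab : w a = w b) by (specialize (Ma b); specialize (Mb a); lra).
    destruct (continuity_ab_maj w a b) as [c [Hc Hcab]]; [lra|intros; apply w_continuity|].
    destruct (Req_dec (w c) (w a)) as [Ec|Nc].
    - assert (Wc : forall y, a < y < b -> w y = w a).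
      { intros y Hy. specialize (Hc y ltac:(lra)). specialize (Ma y). lra. }
      set (m := (a + b) / 2).
      assert (Zm : dw 1%nat m = 0)
        by (apply (derivable_pt_lim_locally_const w m _ a b (w a));
              [unfold m; lra|auto|apply w_deriv]).
      apply (deriv_simple_zero m Zm).
      apply (derivable_pt_lim_locally_const (dw 1%nat) m _ a b 0); [unfold m; lra| |apply P].
      intros y Hy. apply (derivable_pt_lim_locally_const w y _ a b (w a)); auto. apply w_deriv.
    - assert (Hc' : a < c < b).
      { split; apply Rnot_le_lt; intros Hle; apply Nc;
          [f_equal; lra|replace c with b by lra; now symmetry]. }
      assert (Zc : dw 1%nat c = 0)
        by (apply (derivable_pt_lim_interior_max w c _ a b); auto;
              [intros; apply Hc; lra|apply w_deriv]).
      destruct (critical_point_global_min c Zc) as [_ Mc].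
      specialize (Mc a). specialize (Hc a). lra. }
  intros Za Zb. destruct (Rtotal_order a b) as [H|[H|H]]; auto; exfalso; eapply K; eauto.
Qed.

End PositiveSpeed.

End Profile.

Lemma profile_deriv_zero_unique g nu kappa eta_inf s w eta dw deta :
  -1 < nu -> 0 < kappa -> 0 < eta_inf -> s <> 0 -> profile g nu kappa eta_inf s w eta dw deta ->
  forall a b, dw 1%nat a = 0 -> dw 1%nat b = 0 -> a = b.
Proof.
  intros Hnu Hk He Hs P a b Za Zb. destruct (Rlt_dec 0 s) as [Hpos|Hneg].
  - exact (deriv_zero_unique g nu kappa eta_inf s w eta dw deta Hnu Hk He P Hpos a b Za Zb).
  - apply (deriv_zero_unique g nu kappa eta_inf (- s) _ eta _ deta Hnu Hk He
             (profile_opp _ _ _ _ _ _ _ _ _ P)); [lra|rewrite Za|rewrite Zb]; ring.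
Qed.

(** * Square integrability *)

Lemma continuity_sq_Riemann_integrable f a b : continuity f ->
  inhabited (Riemann_integrable (fun x => f x ^ 2) a b).
Proof.
  intros C. assert (C2 : continuity (fun x => f x ^ 2)) by (intros x; apply continuity_pt_mult;
    [apply C|apply continuity_pt_mult; [apply C|apply continuity_pt_const; now intros ? ?]]).
  constructor. destruct (Rle_dec a b).
  - now apply continuity_implies_RiemannInt.
  - apply RiemannInt_P1, continuity_implies_RiemannInt; auto; lra.
Qed.

Lemma RiemannInt_le_comb f g h l a b (prf : Riemann_integrable f a b)
  (prg : Riemann_integrable g a b) (prh : Riemann_integrable h a b) :
  a <= b -> (forall x, a < x < b -> h x <= f x + l * g x) ->
  RiemannInt prh <= RiemannInt prf + l * RiemannInt prg.
Proof.
  intros Hab Hle. rewrite <- (RiemannInt_P13 prf prg (RiemannInt_P10 l prf prg)).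
  now apply RiemannInt_P19.
Qed.

Lemma sq_integrable_dominated f h K : continuity h -> 0 <= K ->
  (forall x, h x ^ 2 <= K * f x ^ 2) -> sq_integrable f -> sq_integrable h.
Proof.
  intros Ch HK Hb [If [C HC]]. split; [intros; now apply continuity_sq_Riemann_integrable|].
  exists (K * C). intros a b pr Hab. destruct (If a b) as [prf].
  pose proof (RiemannInt_le_comb _ _ _ K a b (RiemannInt_P14 a b 0) prf pr Hab) as Hle.
  rewrite RiemannInt_P15 in Hle. specialize (HC a b prf Hab).
  assert (RiemannInt pr <= 0 * (b - a) + K * RiemannInt prf)
    by (apply Hle; intros x _; unfold fct_cte; rewrite Rplus_0_l; apply Hb).
  nra.
Qed.

(* Integration by parts: [int M1^2 = [M M1] - int q M^2], with [M M1] bounded. *)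
Lemma sq_integrable_deriv q M M1 M2 Bq : decaying_solution q M M1 M2 ->
  continuity q -> (forall z, Rabs (q z) <= Bq) -> sq_integrable M -> sq_integrable M1.
Proof.
  intros HM Cq Bqb [IM [C HC]].
  destruct HM as [D1 D2 E TM TM1].
  assert (CM : continuity M) by (intros x; eapply derivable_pt_lim_continuity_pt, D1).
  assert (CM1 : continuity M1) by (intros x; eapply derivable_pt_lim_continuity_pt, D2).
  destruct (continuity_bounded (fun z => M z * M1 z)) as [B HB].
  { intros x; now apply continuity_pt_mult. }
  { now apply decays_mult. }
  split; [intros; now apply continuity_sq_Riemann_integrable|].
  exists (2 * B + Bq * C). intros a b pr Hab.
  set (h := fun x => M1 x * M1 x + M x * M2 x).
  assert (Dh : forall x, derivable_pt_lim (fun z => M z * M1 z) x (h x))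
    by (intros x; now apply derivable_pt_lim_mult).
  set (dif := fun x => exist _ (h x) (Dh x) : derivable_pt (fun z => M z * M1 z) x).
  assert (Ch : continuity (derive (fun z => M z * M1 z) dif)).
  { intros x. unfold derive, derive_pt, dif. simpl. unfold h.
    apply (continuity_pt_locally_ext (fun x => M1 x * M1 x + M x * (q x * M x)) _ 1 x);
      [lra|intros; now rewrite E|].
    apply continuity_pt_plus; repeat apply continuity_pt_mult; auto. }
  set (F := @mkC1 (fun z => M z * M1 z) dif Ch).
  assert (prd : Riemann_integrable (derive F (diff0 F)) a b)
    by (apply continuity_implies_RiemannInt; auto; intros; apply (cont1 F)).
  destruct (IM a b) as [prM].
  assert (L := RiemannInt_le_comb _ _ _ Bq a b prd prM pr Hab).
  rewrite (FTC_Riemann F prd) in L. specialize (HC a b prM Hab).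
  assert (RiemannInt pr <= M b * M1 b - M a * M1 a + Bq * RiemannInt prM).
  { apply L. intros x _. change (derive F (diff0 F) x) with (h x). unfold h. rewrite E.
    specialize (Bqb x).
    assert (- Bq <= q x) by (pose proof (Rle_abs (- q x)); rewrite Rabs_Ropp in *; lra).
    pose proof (pow2_ge_0 (M x)). simpl. nra. }
  pose proof (Rle_abs (M b * M1 b)). pose proof (Rle_abs (- (M a * M1 a))). rewrite Rabs_Ropp in *.
  pose proof (HB a). pose proof (HB b).
  assert (0 <= Bq) by (eapply Rle_trans; [apply Rabs_pos|apply (Bqb 0)]).
  nra.
Qed.

Lemma gen_eigen_Ls_eigen beta nu kappa s eta mu M : -1 < nu -> 0 < kappa -> mu < 0 ->
  (forall z, 0 < eta z) -> continuity eta -> gen_eigen beta nu kappa s eta mu M ->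
  Ls_eigen beta nu kappa s eta mu M (fun z => s * M z / (mu - pot nu eta z)).
Proof.
  intros Hnu Hk Hmu Hpos Ceta HE.
  destruct HE as (M1 & M2 & D1 & D2 & Sq & Hnt & T1 & T2 & T3 & T4 & Heq).
  set (q := eig_pot (gam beta nu) nu kappa s eta mu).
  set (K := (Rabs (gam beta nu - mu) + s ^ 2 / (- mu)) / kappa).
  assert (HS : decaying_solution q M M1 M2).
  { split; auto; [|split; auto|split; auto]. intros; now apply eig_pot_spec. }
  assert (Cq : continuity q) by (intros z; apply eig_pot_continuity; auto; lra).
  assert (Bq : forall z, Rabs (q z) <= K) by (intros; now apply eig_pot_bound).
  assert (CM : continuity M) by (intros x; eapply derivable_pt_lim_continuity_pt, D1).
  assert (Hp : forall z, 0 < pot nu eta z) by (intros; now apply pot_pos).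
  exists M1, M2. do 3 (split; [assumption|]).
  split; [|split; [|split; [|split; [|split]]]].
  - now apply (sq_integrable_deriv q M M1 M2 K).
  - apply (sq_integrable_dominated M M2 (K ^ 2)); auto; [|apply pow2_ge_0|].
    + intros x. apply (continuity_pt_locally_ext (fun z => q z * M z) M2 1 x); [lra| |].
      * intros; symmetry; apply HS.
      * now apply continuity_pt_mult.
    + intros x. rewrite (dsol_eq HS), Rpow_mult_distr. apply Rmult_le_compat_r; [apply pow2_ge_0|].
      rewrite <- (pow2_abs (q x)). apply pow_incr; split; [apply Rabs_pos|apply Bq].
  - apply (sq_integrable_dominated M _ (s ^ 2 / mu ^ 2)); auto.
    + intros x. apply continuity_pt_div.
      * apply continuity_pt_mult; [apply continuity_pt_const; now intros ? ?|apply CM].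
      * apply continuity_pt_minus; [apply continuity_pt_const; now intros ? ?|].
        now apply pot_continuity.
      * specialize (Hp x). lra.
    + apply Rmult_le_pos; [apply pow2_ge_0|left; apply Rinv_0_lt_compat; nra].
    + intros x. specialize (Hp x).
      replace ((s * M x / (mu - pot nu eta x)) ^ 2)
        with (s ^ 2 * M x ^ 2 * / (mu - pot nu eta x) ^ 2) by (field; lra).
      replace (s ^ 2 / mu ^ 2 * M x ^ 2) with (s ^ 2 * M x ^ 2 * / mu ^ 2) by (field; lra).
      apply Rmult_le_compat_l; [apply Rmult_le_pos; apply pow2_ge_0|].
      apply Rinv_le_contravar; nra.
  - destruct Hnt as [z Hz]. exists z. now left.
  - intros z. specialize (Hp z). rewrite (Heq z). field. lra.
  - intros z. specialize (Hp z). field. lra.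
Qed.

Lemma gen_eigen_nonvanishing beta nu kappa eta_inf s w eta dw deta mu M :
  -1 < nu -> 0 < kappa -> 0 < eta_inf -> s <> 0 ->
  profile (gam beta nu) nu kappa eta_inf s w eta dw deta ->
  mu < 0 -> gen_eigen beta nu kappa s eta mu M ->
  exists M1 M2, decaying_solution (eig_pot (gam beta nu) nu kappa s eta mu) M M1 M2 /\
                forall z, M z <> 0.
Proof.
  intros Hnu Hkappa Heta_inf Hs P Hmu HE.
  destruct (gen_eigen_decaying_solution _ _ _ _ _ _ _ Hkappa HE) as (M1 & M2 & HS).
  exists M1, M2. split; auto.
  apply (sturm_nonvanishing _ _ M M1 M2 _ _ _ HS
           (deriv_decaying_solution _ _ _ _ _ _ _ _ _ Hnu Hkappa P)).
  - intros; apply eig_pot_decreasing; auto; lra.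
  - intros; apply eig_pot_continuity; first [assumption|lra|apply P|eapply eta_continuity, P].
  - destruct HE as (? & ? & ? & ? & ? & Hnt & _). exact Hnt.
  - exact (profile_deriv_zero_unique _ _ _ _ _ _ _ _ _ Hnu Hkappa Heta_inf Hs P).
Qed.

Theorem mainTheorem7 (beta nu kappa eta_inf s : R) (w eta : R -> R)
  (Hbeta : 0 < beta) (Hnu : -1 < nu) (Hkappa : 0 < kappa) (Heta_inf : 0 < eta_inf)
  (Hsol : soliton beta nu kappa eta_inf s w eta)
  (Hs1 : beta * (nu + 1) / (2 * (nu + 2) * Rpower eta_inf (nu + 3)) < s ^ 2)
  (Hs2 : s ^ 2 < beta / Rpower eta_inf (nu + 3)) :
  (forall mu1 mu2 M1 M2, mu1 < 0 -> mu2 < 0 ->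
     gen_eigen beta nu kappa s eta mu1 M1 -> gen_eigen beta nu kappa s eta mu2 M2 ->
     mu1 = mu2) /\
  (forall mu M, mu < 0 -> gen_eigen beta nu kappa s eta mu M ->
     Ls_eigen beta nu kappa s eta mu M (fun z => s * M z / (mu - pot nu eta z))).
Proof.
  destruct (soliton_profile _ _ _ _ _ _ _ Hsol) as (dw & deta & P).
  (* The bounds on [s ^ 2] are only needed to exclude [s = 0]. *)
  assert (Hs : s <> 0).
  { intros ->. assert (0 < beta * (nu + 1) / (2 * (nu + 2) * Rpower eta_inf (nu + 3))).
    { apply Rdiv_lt_0_compat; [nra|].
      unfold Rpower. pose proof (exp_pos ((nu + 3) * ln eta_inf)). nra. }
    simpl in Hs1. lra. }
  split.
  - intros mu1 mu2 M1 M2 H1 H2 E1 E2.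
    destruct (gen_eigen_nonvanishing _ _ _ _ _ _ _ _ _ _ _ Hnu Hkappa Heta_inf Hs P H1 E1)
      as (A1 & A2 & SA & NA).
    destruct (gen_eigen_nonvanishing _ _ _ _ _ _ _ _ _ _ _ Hnu Hkappa Heta_inf Hs P H2 E2)
      as (B1 & B2 & SB & NB).
    destruct (Rtotal_order mu1 mu2) as [L|[L|L]]; auto; exfalso.
    + apply (nonvanishing_solutions_ordered_absurd _ _ _ _ _ _ _ _ SA SB); auto.
      intros; apply eig_pot_decreasing; auto; lra.
    + apply (nonvanishing_solutions_ordered_absurd _ _ _ _ _ _ _ _ SB SA); auto.
      intros; apply eig_pot_decreasing; auto; lra.
  - intros mu M Hmu HE. apply gen_eigen_Ls_eigen; auto; [apply P|eapply eta_continuity, P].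
Qed.
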